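(* Let $n\ge2$, $\beta_i>0$, $\nu_i\in[0,1]$ and $\rho_i\in[0,1]$ for $i\in\{1,\dots,n\}$, and consider the well-mixed resource–consumption system \[ \dot x=(1-x)x-x\sum_{i=1}^n y_i,\qquad \dot y_i=\beta_i\Big((1-\nu_i)(x-\rho_i)+\frac{\nu_i}{n-1}\sum_{j\ne i}(y_j-y_i)\Big),\quad i=1,\dots,n . \] Assume that at most one of $\nu_1,\dots,\nu_n$ equals $0$, and that it is not the case that all $\nu_i=1$, not the case that all $\nu_i=0$, not the case that all $\rho_i=1$, and not the case that all $\rho_i=0$. Then the point $(\bar x,\bar y_1,\dots,\bar y_n)$ given by \[ \bar x=\frac{\sum_{i}\Big(\rho_i(\nu_i-1)\prod_{j\ne i}\nu_j\Big)}{n\prod_{j}\nu_j-\sum_{j}\prod_{k\ne j}\nu_k}, \] \[ \bar y_i=\frac1n+\frac{\rho_i(\nu_i-1)\Big((1-n)\sum_{j\ne i}\prod_{k\ne i,j}\nu_k+n(n-2)\prod_{j\ne i}\nu_j\Big)-(1-n+n\nu_i)\sum_{j\ne i}\Big(\rho_j(\nu_j-1)\prod_{k\ne i,j}\nu_k\Big)}{n\Big(n\prod_{j}\nu_j-\sum_{j}\prod_{k\ne j}\nu_k\Big)}, \] for $i\in\{1,\dots,n\}$ (all indices ranging over $\{1,\dots,n\}$, empty products equal to $1$), is an equilibrium of the system.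
   Context: An equilibrium is a point $(\bar x,\bar y_1,\dots,\bar y_n)\in\mathbb{R}^{n+1}$ at which all right-hand sides vanish. *)

From mathcomp Require Import all_boot all_order all_algebra.
Set Implicit Arguments. Unset Strict Implicit. Unset Printing Implicit Defensive.
Import Order.TTheory GRing.Theory Num.Theory.
Local Open Scope ring_scope.

Section System.
Variables (R : realFieldType) (n : nat) (beta nu rho : 'I_n -> R).

Definition xdot (x : R) (y : 'I_n -> R) : R :=
  (1 - x) * x - x * \sum_(i < n) y i.

Definition ydot (i : 'I_n) (x : R) (y : 'I_n -> R) : R :=
  beta i * ((1 - nu i) * (x - rho i)
            + nu i / (n%:R - 1) * \sum_(j < n | j != i) (y j - y i)).

Definition is_equilibrium (x : R) (y : 'I_n -> R) : Prop :=
  xdot x y = 0 /\ forall i : 'I_n, ydot i x y = 0.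

Definition denom : R :=
  n%:R * \prod_(j < n) nu j - \sum_(j < n) \prod_(k < n | k != j) nu k.

Definition xbar : R :=
  (\sum_(i < n) (rho i * (nu i - 1) * \prod_(j < n | j != i) nu j)) / denom.

Definition ybar (i : 'I_n) : R :=
  1 / n%:R +
  (rho i * (nu i - 1) *
     ((1 - n%:R) * \sum_(j < n | j != i) \prod_(k < n | (k != i) && (k != j)) nu k
      + n%:R * (n%:R - 2) * \prod_(j < n | j != i) nu j)
   - (1 - n%:R + n%:R * nu i) *
       \sum_(j < n | j != i) (rho j * (nu j - 1) * \prod_(k < n | (k != i) && (k != j)) nu k))
  / (n%:R * denom).
End System.

(* Write [P_i] for the product of the [nu_j] with [j <> i], [a_i = rho_i (nu_i - 1)],
   [T = sum_i a_i P_i], and [D = denom = sum_i (nu_i - 1) P_i], which is negative under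
   the hypotheses (some [P_j > 0] has [nu_j < 1]), so [xbar = T / D].  Multiplying by
   [nu_i] collapses the double products of [ybar i]: [nu_i P_ij = P_j].  Two identities
   then suffice: the [ybar i] sum to [1 - xbar], which makes the x equation vanish, and
   [nu_i] times the numerator of [ybar i] is [(n-1) a_i D + (n - 1 - n nu_i) T], which
   turns the coupling term of the [y_i] equation into [(1 - nu_i) (rho_i - xbar)]. *)
From mathcomp Require Import all_boot all_order all_algebra.
From mathcomp Require Import ring lra.
Set Implicit Arguments. Unset Strict Implicit. Unset Printing Implicit Defensive.
Import Order.TTheory GRing.Theory Num.Theory.
Local Open Scope ring_scope.

Lemma sumr_neq (V : zmodType) (I : finType) (i : I) (f : I -> V) :
  \sum_(j | j != i) f j = \sum_j f j - f i.
Proof. by rewrite [X in _ = X - _](bigD1 i) //= addrC addrK. Qed.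

Section Equilibrium.
Variables (R : realFieldType) (n : nat) (nu rho : 'I_n -> R).

Definition prod_but (i : 'I_n) : R := \prod_(j < n | j != i) nu j.

Definition prod_but2 (i j : 'I_n) : R :=
  \prod_(k < n | (k != i) && (k != j)) nu k.

Definition weight (i : 'I_n) : R := rho i * (nu i - 1).

Definition xnum : R := \sum_(i < n) weight i * prod_but i.

Definition ynum (i : 'I_n) : R :=
  weight i * ((1 - n%:R) * \sum_(j < n | j != i) prod_but2 i j
              + n%:R * (n%:R - 2) * prod_but i)
  - (1 - n%:R + n%:R * nu i) * \sum_(j < n | j != i) weight j * prod_but2 i j.

Lemma xbarE : xbar nu rho = xnum / denom nu.
Proof. by []. Qed.

Lemma ybarE (i : 'I_n) : ybar nu rho i = 1 / n%:R + ynum i / (n%:R * denom nu).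
Proof. by []. Qed.

Lemma prod_but_mul (i : 'I_n) : \prod_(j < n) nu j = nu i * prod_but i.
Proof. exact: bigD1. Qed.

Lemma prod_but2_mul (i j : 'I_n) : j != i -> prod_but j = nu i * prod_but2 i j.
Proof.
move=> ji; rewrite /prod_but (bigD1 i) 1?eq_sym //=; congr (_ * _).
by apply: eq_bigl => k; rewrite andbC.
Qed.

Lemma prod_but2C (i j : 'I_n) : prod_but2 i j = prod_but2 j i.
Proof. by apply: eq_bigl => k; rewrite andbC. Qed.

Lemma denomE : denom nu = \sum_(k < n) (nu k - 1) * prod_but k.
Proof.
rewrite /denom -[n in n%:R](card_ord n) mulr_natl -sumr_const.
rewrite (eq_bigr (fun k => nu k * prod_but k)) => [|k _]; last exact: prod_but_mul.
by rewrite -sumrB; apply: eq_bigr => k _; rewrite /prod_but; ring.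
Qed.

Lemma denom_lt0 :
  (forall i, 0 <= nu i <= 1) ->
  (forall i j, nu i = 0 -> nu j = 0 -> i = j) ->
  ~ (forall i, nu i = 1) ->
  denom nu < 0.
Proof.
move=> nu01 nu0_uniq not_all1.
have nu_ge0 k : 0 <= nu k by case/andP: (nu01 k).
have nu_le1 k : nu k <= 1 by case/andP: (nu01 k).
have [j nu_j_lt1 prod_j_gt0] : exists2 j, nu j < 1 & 0 < prod_but j.
  case: (pickP (fun j => nu j == 0)) => [j0 /eqP nu_j0 | nu_neq0].
    exists j0; first by rewrite nu_j0 ltr01.
    apply: prodr_gt0 => k kj0; rewrite lt_neqAle nu_ge0 andbT.
    by apply/eqP => /esym nu_k; move/eqP: kj0; apply; apply: nu0_uniq.
  have nu_gt0 k : 0 < nu k by rewrite lt_neqAle nu_ge0 andbT eq_sym nu_neq0.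
  case: (pickP (fun j => nu j != 1)) => [j /= nu_j_neq1 | all1]; last first.
    by case: not_all1 => i; apply/eqP; rewrite -[_ == _]negbK all1.
  exists j; first by rewrite lt_neqAle nu_j_neq1 nu_le1.
  by apply: prodr_gt0 => k _.
rewrite denomE (bigD1 j) //=.
have term_j : (nu j - 1) * prod_but j < 0 by rewrite pmulr_llt0 // subr_lt0.
have rest : \sum_(k < n | k != j) (nu k - 1) * prod_but k <= 0.
  apply: sumr_le0 => k _; rewrite mulr_le0_ge0 ?subr_le0 //.
  exact: prodr_ge0.
lra.
Qed.

Lemma sum_weight_prod_but2 (i : 'I_n) :
  nu i * \sum_(j < n | j != i) weight j * prod_but2 i j = xnum - weight i * prod_but i.
Proof.
rewrite mulr_sumr -sumr_neq; apply: eq_bigr => j ji.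
by rewrite (prod_but2_mul ji) mulrCA.
Qed.

Lemma sum_prod_but2 (i : 'I_n) :
  nu i * \sum_(j < n | j != i) prod_but2 i j = \sum_(j < n) prod_but j - prod_but i.
Proof.
rewrite mulr_sumr -sumr_neq; apply: eq_bigr => j ji.
by rewrite (prod_but2_mul ji).
Qed.

Lemma sum_weight_sum_prod_but2 :
  \sum_(i < n) weight i * \sum_(j < n | j != i) prod_but2 i j
  = \sum_(i < n) \sum_(j < n | j != i) weight j * prod_but2 i j.
Proof.
under eq_bigr do rewrite mulr_sumr.
rewrite (exchange_big_dep xpredT) //=; apply: eq_bigr => j _.
by apply: eq_big => [i | i _]; [rewrite eq_sym | rewrite prod_but2C].
Qed.

Lemma sum_ynum : \sum_(i < n) ynum i = - (n%:R * xnum).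
Proof.
rewrite (eq_bigr (fun i =>
    (1 - n%:R) * (weight i * \sum_(j < n | j != i) prod_but2 i j)
  + n%:R * (n%:R - 2) * (weight i * prod_but i)
  - (1 - n%:R) * \sum_(j < n | j != i) weight j * prod_but2 i j
  - n%:R * (nu i * \sum_(j < n | j != i) weight j * prod_but2 i j))) => [|i _];
  last by rewrite /ynum; ring.
rewrite !sumrB big_split /= -!mulr_sumr sum_weight_sum_prod_but2.
under [X in _ - _ * X]eq_bigr do rewrite sum_weight_prod_but2.
by rewrite sumrB sumr_const card_ord -/xnum -mulr_natr; ring.
Qed.

Lemma mul_nu_ynum (i : 'I_n) :
  nu i * ynum i
  = (n%:R - 1) * weight i * denom nu + (n%:R - 1 - n%:R * nu i) * xnum.
Proof.
transitivity (weight i * ((1 - n%:R) * (nu i * \sum_(j < n | j != i) prod_but2 i j)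
                          + n%:R * (n%:R - 2) * (nu i * prod_but i))
  - (1 - n%:R + n%:R * nu i) * (nu i * \sum_(j < n | j != i) weight j * prod_but2 i j)).
  by rewrite /ynum; ring.
by rewrite sum_prod_but2 sum_weight_prod_but2 /denom (prod_but_mul i) /prod_but; ring.
Qed.

Lemma sum_ybar : n%:R != 0 :> R -> denom nu != 0 ->
  \sum_(i < n) ybar nu rho i = 1 - xbar nu rho.
Proof.
move=> n_neq0 denom_neq0.
under eq_bigr do rewrite ybarE.
rewrite big_split /= sumr_const card_ord -mulr_suml sum_ynum xbarE -mulr_natr.
by field; rewrite n_neq0 denom_neq0.
Qed.

Lemma xdot_bar : n%:R != 0 :> R -> denom nu != 0 ->
  xdot (xbar nu rho) (ybar nu rho) = 0.
Proof. by move=> n_neq0 denom_neq0; rewrite /xdot sum_ybar //; ring. Qed.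

Lemma ydot_bar (beta : 'I_n -> R) (i : 'I_n) :
  n%:R - 1 != 0 :> R -> n%:R != 0 :> R -> denom nu != 0 ->
  ydot beta nu rho i (xbar nu rho) (ybar nu rho) = 0.
Proof.
move=> n1_neq0 n_neq0 denom_neq0.
have coupling : \sum_(j < n | j != i) (ybar nu rho j - ybar nu rho i)
    = - (xnum + ynum i) / denom nu.
  rewrite sumr_neq sumrB sumr_const card_ord subrr subr0 sum_ybar // xbarE ybarE.
  by rewrite -mulr_natl; field; rewrite n_neq0 denom_neq0.
rewrite /ydot coupling.
have -> : nu i / (n%:R - 1) * (- (xnum + ynum i) / denom nu)
        = - (nu i * xnum + nu i * ynum i) / ((n%:R - 1) * denom nu).
  by field; rewrite n1_neq0 denom_neq0.
by rewrite mul_nu_ynum xbarE /weight; field; rewrite n1_neq0 denom_neq0.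
Qed.

End Equilibrium.

Theorem lemma10p6 (R : realFieldType) (n : nat) (beta nu rho : 'I_n -> R) :
  (2 <= n)%N ->
  (forall i, 0 < beta i) ->
  (forall i, 0 <= nu i <= 1) ->
  (forall i, 0 <= rho i <= 1) ->
  (forall i j, nu i = 0 -> nu j = 0 -> i = j) ->
  ~ (forall i, nu i = 1) ->
  ~ (forall i, nu i = 0) ->
  ~ (forall i, rho i = 1) ->
  ~ (forall i, rho i = 0) ->
  is_equilibrium beta nu rho (xbar nu rho) (ybar nu rho).
Proof.
(* Only [denom nu <> 0] and [n >= 2] matter; the conditions on [beta] and [rho] are unused. *)
move=> n_ge2 _ nu01 _ nu0_uniq not_all1 _ _ _.
have n_ge2R : 2 <= n%:R :> R by rewrite ler_nat.
have n_neq0 : n%:R != 0 :> R by apply/eqP => n0; rewrite n0 in n_ge2R; lra.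
have n1_neq0 : n%:R - 1 != 0 :> R by apply/eqP => n1; lra.
have denom_neq0 : denom nu != 0 by rewrite lt_eqF // denom_lt0.
split; first exact: xdot_bar.
by move=> i; exact: ydot_bar.
Qed.
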